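(* Let $A\in\mathbb{C}^{n\times n}$ of rank $r>0$ be written in the Hartwig–Spindelböck decomposition $A=U\begin{bmatrix}\Sigma K&\Sigma L\\0&0\end{bmatrix}U^*$ (as in the context), and let $m\in\mathbb{N}=\{1,2,\dots\}$. Then $$A^{\#_m}=U\begin{bmatrix}(\Sigma K)^{\mathrm{WG}_m}P_{(\Sigma K)^{m-1}}&0\\0&0\end{bmatrix}U^*.$$
   Context: Hartwig–Spindelböck decomposition: any $A\in\mathbb{C}^{n\times n}$ of rank $r>0$ can be written as $A=U\begin{bmatrix}\Sigma K&\Sigma L\\0&0\end{bmatrix}U^*$ with $U$ unitary, $\Sigma=\mathrm{diag}(\sigma_1I_{r_1},\dots,\sigma_sI_{r_s})$, $\sigma_1>\dots>\sigma_s>0$ the singular values of $A$, $r_1+\dots+r_s=r$, and $K\in\mathbb{C}^{r\times r}$, $L\in\mathbb{C}^{r\times(n-r)}$ with $KK^*+LL^*=I_r$. For a square matrix $B$: $B^\dagger$ Moore–Penrose inverse, $P_B=BB^\dagger$, $B^0=I$, $\mathcal{R}(\cdot)$ column space; $\mathrm{Ind}(B)$ is the smallest nonnegative integer $k$ with $\mathcal{R}(B^k)=\mathcal{R}(B^{k+1})$. The core-EP inverse $B^{\mathrm{cEP}}$ is the unique $X$ with $XBX=X$ and $\mathcal{R}(X)=\mathcal{R}(X^* )=\mathcal{R}(B^k)$, $k=\mathrm{Ind}(B)$. For $m\in\mathbb{N}$, the $m$-weak group inverse is $B^{\mathrm{WG}_m}:=(B^{\mathrm{cEP}})^{m+1}B^m$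 and the $m$-weak core inverse is $B^{\#_m}:=B^{\mathrm{WG}_m}P_{B^m}$. *)

From HB Require Import structures.
From mathcomp Require Import all_boot all_order all_algebra.
From mathcomp Require Import complex.
From mathcomp Require Import boolp classical_sets reals.
Set Implicit Arguments. Unset Strict Implicit. Unset Printing Implicit Defensive.
Import Order.TTheory GRing.Theory Num.Theory Num.Syntax.
Local Open Scope ring_scope.

Section MatrixInverses.
Variable C : numClosedFieldType.

Definition ctrmx m n (B : 'M[C]_(m, n)) : 'M[C]_(n, m) := map_mx (@Num.conj C) B^T.

(* R(X) = R(Y) : equality of column spaces (= row spaces of transposes) *)
Definition colsp_eq n m p (X : 'M[C]_(n, m)) (Y : 'M[C]_(n, p)) : Prop :=
  (X^T == Y^T)%MS.

Definition is_MP n (B X : 'M[C]_n) : Prop :=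
  [/\ B *m X *m B = B, X *m B *m X = X,
      ctrmx (B *m X) = B *m X & ctrmx (X *m B) = X *m B].
Definition mpinv n (B : 'M[C]_n) : 'M[C]_n := xget 0 [set X | is_MP B X].

Definition projP n (B : 'M[C]_n) : 'M[C]_n := B *m mpinv B.

Definition is_index n (B : 'M[C]_n) (k : nat) : Prop :=
  colsp_eq (B ^+ k) (B ^+ k.+1) /\
  (forall j, (j < k)%N -> ~ colsp_eq (B ^+ j) (B ^+ j.+1)).

Definition is_coreEP n (B X : 'M[C]_n) : Prop :=
  X *m B *m X = X /\
  exists k, [/\ is_index B k, colsp_eq X (B ^+ k) & colsp_eq (ctrmx X) (B ^+ k)].
Definition coreEP n (B : 'M[C]_n) : 'M[C]_n := xget 0 [set X | is_coreEP B X].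

Definition wgInv (m : nat) n (B : 'M[C]_n) : 'M[C]_n :=
  coreEP B ^+ m.+1 *m B ^+ m.

Definition wcInv (m : nat) n (B : 'M[C]_n) : 'M[C]_n :=
  wgInv m B *m projP (B ^+ m).

End MatrixInverses.

From HB Require Import structures.
From mathcomp Require Import all_boot all_order all_algebra.
From mathcomp Require Import complex.
From mathcomp Require Import boolp classical_sets reals.
Import Order.TTheory GRing.Theory Num.Theory Num.Syntax.
Local Open Scope ring_scope.
Set Implicit Arguments. Unset Strict Implicit. Unset Printing Implicit Defensive.

(* Every ingredient of the m-weak core inverse (Moore-Penrose projector, index,
   core-EP inverse) is defined by conditions invariant under unitary similarity,
   so it suffices to compute it for T = [S Q; 0 0] with S = Sigma K, Q = Sigma L.
   Since [S Q] has the right inverse [K^*; L^*] Sigma^-1, the column space of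
   T^(j+1) = [S^j S, S^j Q; 0, 0] is that of S^j placed in the top block.  Hence
   T^cEP = [S^cEP 0; 0 0] and P_(T^(j+1)) = [P_(S^j) 0; 0 0]; multiplying out
   T^(#_m) = (T^cEP)^(m+1) T^m P_(T^m) gives the formula, the projector of T^m
   being the one of S^(m-1). *)

Section GeneralizedInverses.
Variable C : numClosedFieldType.

Lemma ctrmxE m n (A : 'M[C]_(m, n)) i j : ctrmx A i j = (A j i)^*.
Proof. by rewrite /ctrmx !mxE. Qed.

Lemma ctrmxK m n (A : 'M[C]_(m, n)) : ctrmx (ctrmx A) = A.
Proof. by apply/matrixP=> i j; rewrite !ctrmxE conjCK. Qed.

Lemma ctrmx_mul m n p (A : 'M[C]_(m, n)) (B : 'M[C]_(n, p)) :
  ctrmx (A *m B) = ctrmx B *m ctrmx A.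
Proof. by rewrite /ctrmx trmx_mul map_mxM. Qed.

Lemma ctrmx0 m n : ctrmx (0 : 'M[C]_(m, n)) = 0.
Proof. by rewrite /ctrmx trmx0 map_mx0. Qed.

Lemma ctrmx_inv n (A : 'M[C]_n) : ctrmx (invmx A) = invmx (ctrmx A).
Proof. by rewrite /ctrmx trmx_inv map_invmx. Qed.

Lemma ctr_block_mx m1 m2 n1 n2 (Aul : 'M[C]_(m1, n1)) (Aur : 'M[C]_(m1, n2))
    (Adl : 'M[C]_(m2, n1)) (Adr : 'M[C]_(m2, n2)) :
  ctrmx (block_mx Aul Aur Adl Adr) =
  block_mx (ctrmx Aul) (ctrmx Adl) (ctrmx Aur) (ctrmx Adr).
Proof. by rewrite /ctrmx tr_block_mx map_block_mx. Qed.

Lemma mxrank_ctrmx m n (A : 'M[C]_(m, n)) : \rank (ctrmx A) = \rank A.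
Proof. by rewrite /ctrmx mxrank_map mxrank_tr. Qed.

Lemma ctrmx_mul_eq0 m n (F : 'M[C]_(m, n)) : ctrmx F *m F = 0 -> F = 0.
Proof.
move=> F0; apply/matrixP=> i j; rewrite mxE.
have sum0 : \sum_k `|F k j| ^+ 2 = 0.
  have := congr1 (fun M : 'M[C]_n => M j j) F0; rewrite !mxE => Fjj0.
  rewrite -[X in _ = X]Fjj0.
  by apply: eq_bigr => k _; rewrite ctrmxE normCKC.
have /eqP := psumr_eq0P (i := i) (fun k _ => exprn_ge0 2 (normr_ge0 (F k j))) sum0 isT.
by rewrite expf_eq0 normr_eq0 => /andP[_ /eqP].
Qed.

Lemma unitmx_ctrmx_mul n r (F : 'M[C]_(n, r)) :
  \rank F = r -> ctrmx F *m F \in unitmx.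
Proof.
move=> rankF; rewrite -row_free_unit -kermx_eq0; apply/eqP.
set V := kermx _.
have FV0 : ctrmx (F *m ctrmx V) *m (F *m ctrmx V) = 0.
  by rewrite ctrmx_mul ctrmxK !mulmxA -(mulmxA V) mulmx_ker mul0mx.
have /eqP : (ctrmx V)^T *m F^T = 0 by rewrite -trmx_mul (ctrmx_mul_eq0 FV0) trmx0.
rewrite mulmx_free_eq0 /row_free ?mxrank_tr ?rankF // -trmx0 => /eqP/trmx_inj Vs0.
by rewrite trmx0 -[V]ctrmxK Vs0 ctrmx0.
Qed.

(* The Moore-Penrose inverse of a full-rank factorization F G is
   G^* (G G^* )^-1 (F^* F)^-1 F^*. *)
Lemma is_MP_full_rank_mul n r (F : 'M[C]_(n, r)) (G : 'M[C]_(r, n)) :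
  \rank F = r -> \rank G = r -> exists X, is_MP (F *m G) X.
Proof.
move=> rankF rankG.
set MF := ctrmx F *m F; set MG := G *m ctrmx G.
have uF : MF \in unitmx := unitmx_ctrmx_mul rankF.
have uG : MG \in unitmx.
  by rewrite /MG -[G in G *m _]ctrmxK unitmx_ctrmx_mul ?mxrank_ctrmx.
have hermF : ctrmx MF = MF by rewrite /MF ctrmx_mul ctrmxK.
have hermG : ctrmx MG = MG by rewrite /MG ctrmx_mul ctrmxK.
exists (ctrmx G *m invmx MG *m invmx MF *m ctrmx F).
have BX : F *m G *m (ctrmx G *m invmx MG *m invmx MF *m ctrmx F) =
          F *m invmx MF *m ctrmx F.
  by rewrite !mulmxA -(mulmxA F G) -/MG (mulmxK uG).
have XB : ctrmx G *m invmx MG *m invmx MF *m ctrmx F *m (F *m G) =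
          ctrmx G *m invmx MG *m G.
  by rewrite !mulmxA -(mulmxA _ (ctrmx F) F) -/MF (mulmxKV uF).
split.
- by rewrite BX !mulmxA -(mulmxA _ (ctrmx F) F) -/MF (mulmxKV uF).
- by rewrite XB !mulmxA -(mulmxA _ G (ctrmx G)) -/MG (mulmxKV uG).
- by rewrite BX !ctrmx_mul ctrmxK ctrmx_inv hermF mulmxA.
- by rewrite XB !ctrmx_mul ctrmxK ctrmx_inv hermG mulmxA.
Qed.

Lemma mpinvP n (B : 'M[C]_n) : is_MP B (mpinv B).
Proof.
have [X MP_X] : exists X, is_MP B X.
  rewrite -(mulmx_base B); apply: is_MP_full_rank_mul.
    exact/eqP/col_base_full.
  exact/eqP/row_base_free.
exact: (@xgetPex _ 0 [set X | is_MP B X] (ex_intro _ X MP_X)).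
Qed.

Definition colsubmx m1 m2 n (X : 'M[C]_(n, m1)) (Y : 'M[C]_(n, m2)) :=
  (X^T <= Y^T)%MS.

Lemma colsubmxP m1 m2 n (X : 'M[C]_(n, m1)) (Y : 'M[C]_(n, m2)) :
  reflect (exists D, X = Y *m D) (colsubmx X Y).
Proof.
apply: (iffP submxP) => [[D XD] | [D ->]]; last by exists D^T; rewrite trmx_mul.
by exists D^T; apply: trmx_inj; rewrite trmx_mul trmxK.
Qed.

Lemma colsubmxMr m p n (X : 'M[C]_(n, m)) (D : 'M[C]_(m, p)) :
  colsubmx (X *m D) X.
Proof. by apply/colsubmxP; exists D. Qed.

Lemma colsubmx_refl m n (X : 'M[C]_(n, m)) : colsubmx X X.
Proof. exact: submx_refl. Qed.

Lemma colsubmx_trans m1 m2 m3 n (X : 'M[C]_(n, m1)) (Y : 'M[C]_(n, m2))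
    (Z : 'M[C]_(n, m3)) :
  colsubmx X Y -> colsubmx Y Z -> colsubmx X Z.
Proof. exact: submx_trans. Qed.

Lemma colsubmxMl m1 m2 n k (M : 'M[C]_(k, n)) (X : 'M[C]_(n, m1))
    (Y : 'M[C]_(n, m2)) :
  colsubmx X Y -> colsubmx (M *m X) (M *m Y).
Proof. by move=> /colsubmxP[D ->]; rewrite mulmxA colsubmxMr. Qed.

Lemma colsubmx_rank m1 m2 n (X : 'M[C]_(n, m1)) (Y : 'M[C]_(n, m2)) :
  colsubmx X Y -> (\rank X <= \rank Y)%N.
Proof. by rewrite -mxrank_tr -[\rank Y]mxrank_tr; apply: mxrankS. Qed.

Lemma colsp_eqP m1 m2 n (X : 'M[C]_(n, m1)) (Y : 'M[C]_(n, m2)) :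
  colsp_eq X Y <-> colsubmx X Y /\ colsubmx Y X.
Proof. by split => [/andP[] | [XY YX]] //; apply/andP. Qed.

Lemma colsp_eq_leq_rank m1 m2 n (X : 'M[C]_(n, m1)) (Y : 'M[C]_(n, m2)) :
  colsubmx X Y -> (\rank Y <= \rank X)%N -> colsp_eq X Y.
Proof.
move=> XY rankYX; rewrite /colsp_eq -(mxrank_leqif_eq XY).2 !mxrank_tr.
by rewrite eqn_leq colsubmx_rank.
Qed.

Lemma colsp_eq_rank m1 m2 n (X : 'M[C]_(n, m1)) (Y : 'M[C]_(n, m2)) :
  colsp_eq X Y -> \rank X = \rank Y.
Proof.
by move/colsp_eqP=> [XY YX]; apply/eqP; rewrite eqn_leq !colsubmx_rank.
Qed.

Lemma colsp_eq_sym m1 m2 n (X : 'M[C]_(n, m1)) (Y : 'M[C]_(n, m2)) :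
  colsp_eq X Y -> colsp_eq Y X.
Proof. by move/colsp_eqP=> [XY YX]; apply/colsp_eqP. Qed.

Lemma colsp_eq_trans m1 m2 m3 n (X : 'M[C]_(n, m1)) (Y : 'M[C]_(n, m2))
    (Z : 'M[C]_(n, m3)) :
  colsp_eq X Y -> colsp_eq Y Z -> colsp_eq X Z.
Proof.
move=> /colsp_eqP[XY YX] /colsp_eqP[YZ ZY]; apply/colsp_eqP.
by split; [apply: colsubmx_trans XY YZ | apply: colsubmx_trans ZY YX].
Qed.

Lemma herm_idem_colsp_eq n (P1 P2 : 'M[C]_n) :
  ctrmx P1 = P1 -> ctrmx P2 = P2 -> P1 *m P1 = P1 -> P2 *m P2 = P2 ->
  colsp_eq P1 P2 -> P1 = P2.
Proof.
move=> herm1 herm2 idem1 idem2 /colsp_eqP[/colsubmxP[D1 P1D] /colsubmxP[D2 P2D]].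
have P21 : P2 *m P1 = P1 by rewrite {1}P1D mulmxA idem2 -P1D.
have P12 : P1 *m P2 = P2 by rewrite {1}P2D mulmxA idem1 -P2D.
by rewrite -herm1 -P21 ctrmx_mul herm1 herm2 P12.
Qed.

Lemma idem_colsubmx_herm n (P : 'M[C]_n) :
  P *m P = P -> colsubmx (ctrmx P) P -> ctrmx P = P.
Proof.
move=> idem /colsubmxP[W PW].
have PPs : P *m ctrmx P = ctrmx P by rewrite {1}PW mulmxA idem -PW.
by rewrite -PPs -[RHS]ctrmxK -[in RHS]PPs ctrmx_mul ctrmxK.
Qed.

Lemma projP_herm n (B : 'M[C]_n) : ctrmx (projP B) = projP B.
Proof. by case: (mpinvP B). Qed.

Lemma projP_idem n (B : 'M[C]_n) : projP B *m projP B = projP B.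
Proof. by case: (mpinvP B) => BXB _ _ _; rewrite /projP mulmxA BXB. Qed.

Lemma colsp_eq_projP n (B : 'M[C]_n) : colsp_eq (projP B) B.
Proof.
case: (mpinvP B) => BXB _ _ _; apply/colsp_eqP; split; first exact: colsubmxMr.
by apply/colsubmxP; exists B; rewrite /projP BXB.
Qed.

Lemma projP_eq n (B P : 'M[C]_n) :
  ctrmx P = P -> P *m P = P -> colsp_eq P B -> projP B = P.
Proof.
move=> herm idem PB; apply: herm_idem_colsp_eq => //.
- exact: projP_herm.
- exact: projP_idem.
- exact: colsp_eq_trans (colsp_eq_projP B) (colsp_eq_sym PB).
Qed.

Lemma colsubmx_exprS n (B : 'M[C]_n) k : colsubmx (B ^+ k.+1) (B ^+ k).
Proof. by rewrite exprSr -mulmxE colsubmxMr. Qed.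

Lemma colsubmx_expr n (B : 'M[C]_n) k j :
  (k <= j)%N -> colsubmx (B ^+ j) (B ^+ k).
Proof.
move=> /subnK <-; elim: (j - k)%N => [|i IH]; first exact: colsubmx_refl.
exact: colsubmx_trans (colsubmx_exprS _ _) IH.
Qed.

(* The ranks of B^0, B^1, ... decrease strictly until the index is reached,
   which happens before step n+1. *)
Lemma is_index_exists n (B : 'M[C]_n) : exists k, is_index B k.
Proof.
pose stable k := colsp_eq (B ^+ k) (B ^+ k.+1).
have [k stable_k] : exists k, stable k.
  have [/existsP[k Sk] | /existsPn unstable] :=
    boolP [exists k : 'I_n.+1, ((B ^+ k)^T == (B ^+ k.+1)^T)%MS].
    by exists k.
  have rank_drop k : (k <= n.+1)%N -> (\rank (B ^+ k) + k <= n)%N.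
    elim: k => [|k IH] lekn; first by rewrite expr0 addn0 mxrank1.
    have rankS : (\rank (B ^+ k.+1) < \rank (B ^+ k))%N.
      rewrite ltnNge; apply/negP => le_rank.
      have /colsp_eq_sym := colsp_eq_leq_rank (colsubmx_exprS B k) le_rank.
      exact/negP/(unstable (Ordinal lekn)).
    by rewrite addnS (leq_trans _ (IH (ltnW lekn))) // ltn_add2r.
  by have := rank_drop _ (leqnn _); rewrite addnS ltnNge leq_addl.
have [k' stable_k' min_k'] := ex_minnP (ex_intro stable k stable_k).
exists k'; split => // j ltjk stable_j.
by have := min_k' j stable_j; rewrite leqNgt ltjk.
Qed.

Lemma is_index_uniq n (B : 'M[C]_n) k1 k2 :
  is_index B k1 -> is_index B k2 -> k1 = k2.
Proof.
move=> [stable1 min1] [stable2 min2].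
by case: (ltngtP k1 k2) => // [/min2 | /min1].
Qed.

Lemma colsp_eq_expr_index n (B : 'M[C]_n) k j :
  is_index B k -> (k <= j)%N -> colsp_eq (B ^+ j) (B ^+ k).
Proof.
move=> [/colsp_eqP[stable _] _] /subnK <-; apply/colsp_eqP.
split; first exact/colsubmx_expr/leq_addl.
elim: (j - k)%N => [|i IH]; first exact: colsubmx_refl.
apply: colsubmx_trans IH _; rewrite !addSn.
by have := colsubmxMl (B ^+ i) stable; rewrite !mulmxE -!exprD addnS.
Qed.

Lemma is_coreEP_exists n (B : 'M[C]_n) : exists X, is_coreEP B X.
Proof.
have [k index_k] := is_index_exists B.
set Y := B ^+ k.+1.
have [YXY XYX hermYX _] := mpinvP Y.
have BY : B *m B ^+ k = Y by rewrite /Y exprS.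
exists (B ^+ k *m mpinv Y); split.
  by rewrite !mulmxA -(mulmxA _ B) BY -(mulmxA _ _ Y) -mulmxA XYX.
have rank_k : (\rank (B ^+ k) <= \rank (B ^+ k *m mpinv Y))%N.
  have [/colsp_eqP[/colsubmxP[D kD] _] _] := index_k.
  have BXBk : B *m (B ^+ k *m mpinv Y) *m B ^+ k = B ^+ k.
    by rewrite mulmxA BY {1}kD mulmxA YXY -kD.
  rewrite -{1}BXBk; exact: leq_trans (mxrankM_maxl _ _) (mxrankM_maxr _ _).
exists k; split => //; first exact: colsp_eq_leq_rank (colsubmxMr _ _) rank_k.
apply: colsp_eq_leq_rank; last by rewrite mxrank_ctrmx.
rewrite ctrmx_mul; apply: colsubmx_trans (colsubmxMr _ _) _.
have -> : ctrmx (mpinv Y) = Y *m mpinv Y *m ctrmx (mpinv Y).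
  by rewrite -{1}XYX -mulmxA ctrmx_mul hermYX.
by rewrite -mulmxA; apply: colsubmx_trans (colsubmxMr _ _) (colsubmx_exprS _ _).
Qed.

(* B X is the orthogonal projector onto R(B^k) = R(X): it is idempotent with
   range R(X), and Hermitian because R((B X)^* ) <= R(X^* ) = R(X). *)
Lemma is_coreEP_mulmx n (B X : 'M[C]_n) k :
  X *m B *m X = X -> colsp_eq X (B ^+ k) -> colsp_eq (ctrmx X) (B ^+ k) ->
  B *m X = projP (B ^+ k).
Proof.
move=> XBX XBk XsBk.
have idem : B *m X *m (B *m X) = B *m X by rewrite -!mulmxA (mulmxA X) XBX.
have BXBk : colsp_eq (B *m X) (B ^+ k).
  apply: colsp_eq_leq_rank.
    have /colsp_eqP[/(colsubmxMl B) XBk' _] := XBk.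
    by apply: colsubmx_trans XBk' _; rewrite mulmxE -exprS colsubmx_exprS.
  by rewrite -(colsp_eq_rank XBk) -{1}XBX -mulmxA mxrankM_maxr.
symmetry; apply: projP_eq => //; apply: idem_colsubmx_herm => //.
rewrite ctrmx_mul; apply: colsubmx_trans (colsubmxMr _ _) _.
have /colsp_eqP[XsBk' _] := XsBk; have /colsp_eqP[_ BkBX] := BXBk.
exact: colsubmx_trans XsBk' BkBX.
Qed.

Lemma is_coreEP_uniq n (B X1 X2 : 'M[C]_n) :
  is_coreEP B X1 -> is_coreEP B X2 -> X1 = X2.
Proof.
move=> [XBX1 [k1 [index1 X1Bk X1sBk]]] [XBX2 [k2 [index2 X2Bk X2sBk]]].
have k12 := is_index_uniq index1 index2; subst k2.
have BX12 : B *m X1 = B *m X2.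
  by rewrite (is_coreEP_mulmx XBX1 X1Bk X1sBk) (is_coreEP_mulmx XBX2 X2Bk X2sBk).
have /colsubmxP[W X2W] : colsubmx X2 X1.
  have /colsp_eqP[X2Bk' _] := X2Bk; have /colsp_eqP[_ BkX1] := X1Bk.
  exact: colsubmx_trans X2Bk' BkX1.
by rewrite -XBX1 -mulmxA BX12 mulmxA {1}X2W mulmxA XBX1 -X2W.
Qed.

Lemma coreEP_eq n (B X : 'M[C]_n) : is_coreEP B X -> coreEP B = X.
Proof. by move=> cEP_X; apply: xget_unique => //= Y /is_coreEP_uniq; apply. Qed.

Lemma coreEPP n (B : 'M[C]_n) : is_coreEP B (coreEP B).
Proof. by have [X cEP_X] := is_coreEP_exists B; rewrite (coreEP_eq cEP_X). Qed.

Section UnitarySimilarity.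
Variables (n : nat) (U : 'M[C]_n).
Hypothesis unitaryU : U *m ctrmx U = 1%:M.

Local Notation uconj X := (U *m X *m ctrmx U).

Let unitaryU' : ctrmx U *m U = 1%:M := mulmx1C unitaryU.

Lemma uconjM X Y : uconj (X *m Y) = uconj X *m uconj Y.
Proof. by rewrite !mulmxA -(mulmxA _ (ctrmx U) U) unitaryU' mulmx1. Qed.

Lemma uconjX X k : uconj (X ^+ k) = uconj X ^+ k.
Proof.
elim: k => [|k IH]; first by rewrite !expr0 mulmx1 unitaryU.
by rewrite !exprS -!mulmxE uconjM IH.
Qed.

Lemma ctrmx_uconj X : ctrmx (uconj X) = uconj (ctrmx X).
Proof. by rewrite !ctrmx_mul ctrmxK mulmxA. Qed.

Lemma colsubmx_uconj X Y : colsubmx (uconj X) (uconj Y) = colsubmx X Y.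
Proof.
have uconjK Z : ctrmx U *m uconj Z *m U = Z.
  by rewrite !mulmxA unitaryU' mul1mx -mulmxA unitaryU' mulmx1.
apply/colsubmxP/colsubmxP => [[D XD] | [D ->]]; last by exists (uconj D); rewrite uconjM.
by exists (ctrmx U *m D *m U); rewrite -[LHS]uconjK XD !mulmxA unitaryU' mul1mx.
Qed.

Lemma colsp_eq_uconj X Y : colsp_eq (uconj X) (uconj Y) <-> colsp_eq X Y.
Proof. by rewrite !colsp_eqP !colsubmx_uconj. Qed.

Lemma is_index_uconj B k : is_index B k -> is_index (uconj B) k.
Proof.
move=> [stable min]; split; first by rewrite -!uconjX colsp_eq_uconj.
by move=> j ltjk; rewrite -!uconjX colsp_eq_uconj; apply: min.
Qed.

Lemma coreEP_uconj B : coreEP (uconj B) = uconj (coreEP B).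
Proof.
apply: coreEP_eq; have [XBX [k [index_k XBk XsBk]]] := coreEPP B.
split; first by rewrite -!uconjM XBX.
exists k; split; first exact: is_index_uconj.
  by rewrite -uconjX colsp_eq_uconj.
by rewrite -uconjX ctrmx_uconj colsp_eq_uconj.
Qed.

Lemma projP_uconj B : projP (uconj B) = uconj (projP B).
Proof.
apply: projP_eq; first by rewrite ctrmx_uconj projP_herm.
  by rewrite -uconjM projP_idem.
exact/colsp_eq_uconj/colsp_eq_projP.
Qed.

Lemma wcInv_uconj m B : wcInv m (uconj B) = uconj (wcInv m B).
Proof. by rewrite /wcInv /wgInv coreEP_uconj -!uconjX projP_uconj !uconjM. Qed.

End UnitarySimilarity.

Section UpperBlock.
Variables (r q : nat) (S : 'M[C]_r) (Q : 'M[C]_(r, q)).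
Variables (Z1 : 'M[C]_r) (Z2 : 'M[C]_(q, r)).
Hypothesis row_mx_rinv : S *m Z1 + Q *m Z2 = 1%:M.

Local Notation T := (block_mx S Q 0 0 : 'M[C]_(r + q)).
Local Notation ul_block X := (block_mx X 0 0 0 : 'M[C]_(r + q)).

Lemma upper_blockXS j : T ^+ j.+1 = block_mx (S ^+ j *m S) (S ^+ j *m Q) 0 0.
Proof.
elim: j => [|j IH]; first by rewrite expr1 expr0 !mul1mx.
rewrite exprSr -mulmxE IH mulmx_block !mulmx0 !mul0mx !addr0.
by rewrite [S ^+ j.+1]exprSr.
Qed.

Lemma ul_blockXS (X : 'M[C]_r) k : ul_block X ^+ k.+1 = ul_block (X ^+ k.+1).
Proof.
elim: k => [|k IH]; first by rewrite !expr1.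
rewrite exprS -mulmxE IH mulmx_block !mulmx0 !mul0mx !addr0.
by rewrite [X ^+ k.+2]exprS.
Qed.

Lemma colsp_eq_upper_blockXS (X : 'M[C]_r) j :
  colsp_eq X (S ^+ j) -> colsp_eq (ul_block X) (T ^+ j.+1).
Proof.
move=> /colsp_eqP[/colsubmxP[D XD] /colsubmxP[D' SD']]; rewrite upper_blockXS.
apply/colsp_eqP; split; apply/colsubmxP.
  exists (block_mx (Z1 *m D) 0 (Z2 *m D) 0).
  rewrite mulmx_block !mulmx0 !mul0mx !addr0 -!mulmxA !(mulmxA S) !(mulmxA Q).
  by rewrite -mulmxDr -mulmxDl row_mx_rinv mul1mx -XD.
exists (block_mx (D' *m S) (D' *m Q) 0 0).
by rewrite mulmx_block !mulmx0 !mul0mx !addr0 !mulmxA -SD'.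
Qed.

(* The indices of T and S may differ by one, so both ranges are compared with
   powers beyond both indices. *)
Lemma coreEP_upper_block : coreEP T = ul_block (coreEP S).
Proof.
apply: coreEP_eq; have [XSX [kS [indexS XSk XsSk]]] := coreEPP S.
have [kT indexT] := is_index_exists T.
set N := maxn kT kS.
have SN : colsp_eq (S ^+ kS) (S ^+ N).
  exact/colsp_eq_sym/colsp_eq_expr_index/leq_maxr.
have TN : colsp_eq (T ^+ N.+1) (T ^+ kT).
  exact/colsp_eq_expr_index/(leq_trans (leq_maxl kT kS)).
split; first by rewrite !mulmx_block !mulmx0 !mul0mx !addr0 !mul0mx XSX.
exists kT; split => //.
  exact: colsp_eq_trans (colsp_eq_upper_blockXS (colsp_eq_trans XSk SN)) TN.
rewrite ctr_block_mx !ctrmx0.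
exact: colsp_eq_trans (colsp_eq_upper_blockXS (colsp_eq_trans XsSk SN)) TN.
Qed.

Lemma projP_upper_blockXS j : projP (T ^+ j.+1) = ul_block (projP (S ^+ j)).
Proof.
apply: projP_eq.
- by rewrite ctr_block_mx !ctrmx0 projP_herm.
- by rewrite mulmx_block !mulmx0 !mul0mx !addr0 projP_idem.
- exact/colsp_eq_upper_blockXS/colsp_eq_projP.
Qed.

Lemma wcInv_upper_block m :
  wcInv m.+1 T = ul_block (wgInv m.+1 S *m projP (S ^+ m)).
Proof.
rewrite /wcInv /wgInv coreEP_upper_block ul_blockXS projP_upper_blockXS.
rewrite upper_blockXS !mulmx_block !mulmx0 !mul0mx !addr0 !mul0mx.
by rewrite [S ^+ m.+1]exprSr.
Qed.

End UpperBlock.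

End GeneralizedInverses.

Theorem theorem6p1 (R : realType) (r q m : nat)
  (A U : 'M[R[i]]_(r + q)) (d : 'rV[R[i]]_r) (K : 'M[R[i]]_r) (L : 'M[R[i]]_(r, q)) :
  (0 < r)%N -> (0 < m)%N -> \rank A = r ->
  U *m ctrmx U = 1%:M ->
  (forall i : 'I_r, 0 < d 0 i) ->
  (forall i j : 'I_r, (i <= j)%N -> d 0 j <= d 0 i) ->
  K *m ctrmx K + L *m ctrmx L = 1%:M ->
  A = U *m block_mx (diag_mx d *m K) (diag_mx d *m L) 0 0 *m ctrmx U ->
  wcInv m A =
    U *m block_mx (wgInv m (diag_mx d *m K) *m projP ((diag_mx d *m K) ^+ (m - 1)))
                  0 0 0 *m ctrmx U.
Proof.
move=> _ m_gt0 _ unitaryU d_gt0 _ KL_coisometry ->.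
case: m m_gt0 => // m _; rewrite subn1 /=.
have unitSigma : diag_mx d \in unitmx.
  rewrite unitmxE det_diag unitfE prodf_seq_neq0.
  by apply/allP => i _; rewrite lt0r_neq0.
have row_mx_rinv : diag_mx d *m K *m (ctrmx K *m invmx (diag_mx d)) +
    diag_mx d *m L *m (ctrmx L *m invmx (diag_mx d)) = 1%:M.
  by rewrite !mulmxA -mulmxDl -!(mulmxA (diag_mx d)) -mulmxDr KL_coisometry
             mulmx1 mulmxV.
by rewrite (wcInv_uconj unitaryU) (wcInv_upper_block row_mx_rinv).
Qed.
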